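(* Let $S$ be a nonempty subset of $\mathbb{N}^\times\setminus\{1\}$, and let $B$ be a unital C*-algebra generated by a family of isometries $\{S_n\}_{n\in S}$ and a unitary $U$ such that for all $n\in S$: $S_nU=U^nS_n$ and $\sum_{i=0}^{n-1}U^iS_nS_n^*U^{-i}=1_B$. Then $S_nS_m=S_mS_n$ for all $n,m\in S$ if and only if for all $n,m\in S$, $$S_n^*S_m=\sum_{\substack{0\le l\le nm-1\\ l\in n\mathbb{Z}\cap m\mathbb{Z}}}U^{l/n}S_mS_n^*U^{-l/m}.$$
   Context: $\mathbb{N}^\times$ denotes the multiplicative semigroup of positive integers. *)

From Stdlib Require Import Reals List Arith.
Import ListNotations.
Open Scope R_scope.

Definition C : Type := (R * R)%type.
Definition Cadd (a b : C) : C := (fst a + fst b, snd a + snd b).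
Definition Cmul (a b : C) : C :=
  (fst a * fst b - snd a * snd b, fst a * snd b + snd a * fst b).
Definition Cone : C := (1, 0).
Definition Cconj (a : C) : C := (fst a, - snd a).
Definition Cabs (a : C) : R := sqrt (fst a * fst a + snd a * snd a).

Record CStarAlgebra := {
  car :> Type;
  zero : car; one : car;
  add : car -> car -> car; opp : car -> car; mul : car -> car -> car;
  scal : C -> car -> car; star : car -> car; norm : car -> R;
  addA : forall x y z, add x (add y z) = add (add x y) z;
  addC : forall x y, add x y = add y x;
  add0x : forall x, add zero x = x;
  addNx : forall x, add (opp x) x = zero;
  mulA : forall x y z, mul x (mul y z) = mul (mul x y) z;
  mul1x : forall x, mul one x = x;
  mulx1 : forall x, mul x one = x;
  mulDl : forall x y z, mul (add x y) z = add (mul x z) (mul y z);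
  mulDr : forall x y z, mul x (add y z) = add (mul x y) (mul x z);
  scalA : forall a b x, scal (Cmul a b) x = scal a (scal b x);
  scal1 : forall x, scal Cone x = x;
  scalDl : forall a b x, scal (Cadd a b) x = add (scal a x) (scal b x);
  scalDr : forall a x y, scal a (add x y) = add (scal a x) (scal a y);
  scalMl : forall a x y, scal a (mul x y) = mul (scal a x) y;
  scalMr : forall a x y, scal a (mul x y) = mul x (scal a y);
  starK : forall x, star (star x) = x;
  starD : forall x y, star (add x y) = add (star x) (star y);
  starM : forall x y, star (mul x y) = mul (star y) (star x);
  starZ : forall a x, star (scal a x) = scal (Cconj a) (star x);
  norm_eq0 : forall x, norm x = 0 -> x = zero;
  normD : forall x y, norm (add x y) <= norm x + norm y;
  normZ : forall a x, norm (scal a x) = Cabs a * norm x;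
  normM : forall x y, norm (mul x y) <= norm x * norm y;
  normCstar : forall x, norm (mul (star x) x) = norm x * norm x;
  complete : forall u : nat -> car,
    (forall eps, 0 < eps -> exists N, forall j k, (N <= j)%nat -> (N <= k)%nat ->
        norm (add (u j) (opp (u k))) < eps) ->
    exists l, forall eps, 0 < eps -> exists N, forall k, (N <= k)%nat ->
        norm (add (u k) (opp l)) < eps
}.

Arguments zero {_}. Arguments one {_}. Arguments add {_}. Arguments opp {_}.
Arguments mul {_}. Arguments scal {_}. Arguments star {_}. Arguments norm {_}.

Section Ops.
Variable B : CStarAlgebra.

Fixpoint pw (x : B) (n : nat) : B :=
  match n with O => one | S k => mul x (pw x k) end.

Definition sumA (f : nat -> B) (s : list nat) : B :=
  fold_right (fun i acc => add (f i) acc) zero s.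

Definition isometry (s : B) : Prop := mul (star s) s = one.
Definition unitary (u : B) : Prop := mul (star u) u = one /\ mul u (star u) = one.

Definition converges (u : nat -> B) (l : B) : Prop :=
  forall eps, 0 < eps -> exists N, forall k, (N <= k)%nat ->
    norm (add (u k) (opp l)) < eps.

Definition cstar_subalgebra (P : B -> Prop) : Prop :=
  P zero /\ P one /\
  (forall x y, P x -> P y -> P (add x y)) /\
  (forall x, P x -> P (opp x)) /\
  (forall x y, P x -> P y -> P (mul x y)) /\
  (forall a x, P x -> P (scal a x)) /\
  (forall x, P x -> P (star x)) /\
  (forall u l, (forall k, P (u k)) -> converges u l -> P l).

Definition generated_by (U : B) (S : nat -> Prop) (Sg : nat -> B) : Prop :=
  forall P, cstar_subalgebra P -> P U -> (forall n, S n -> P (Sg n)) ->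
    forall x, P x.
End Ops.

Arguments pw {_}. Arguments sumA {_}. Arguments isometry {_}.
Arguments unitary {_}. Arguments generated_by {_}.

(* The relations make the ranges of [U^i S_n] (0 <= i < n) mutually orthogonal,
   i.e. [S_n^* U^r S_n = 0] for [0 < r < n]; together with [S_n U^k = U^(nk) S_n]
   this evaluates every [S_n^* U^k S_n].  If [S_n] and [S_m] commute, inserting
   [1 = sum_j U^j S_n S_n^* U^-j] after [S_n^* S_m] yields the formula.
   Conversely the formula gives [(S_n S_m)^* (S_m S_n) = 1], and two isometries
   [X], [Y] with [X^* Y = 1] coincide because [(X - Y)^* (X - Y) = 0].

   Orthogonality needs a positivity argument, done here with norms only: if
   [u + v = 1] and [|u|, |v| <= 1/2], the sum of [(#u - #v)^2 w] over all words
   [w] of length [N] in [u], [v] equals [N + N (N - 1) (u - v)^2] but has norm at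
   most [N], the second moment of the symmetric random walk; so [(u - v)^2 = 0]. *)

From Stdlib Require Import Reals List Arith Lra Lia Permutation.
Import ListNotations.
Open Scope R_scope.

Section Elementary.
Context {B : CStarAlgebra}.
Implicit Types x y z : B.

Lemma addx0 x : add x zero = x.
Proof. rewrite addC; apply add0x. Qed.

Lemma addxN x : add x (opp x) = zero.
Proof. rewrite addC; apply addNx. Qed.

Lemma addIx z x y : add z x = add z y -> x = y.
Proof.
  intro H. rewrite <- (add0x _ x), <- (add0x _ y), <- (addNx _ z), <- !addA, H.
  reflexivity.
Qed.

Lemma opp_unique x y : add x y = zero -> y = opp x.
Proof. intro H. apply (addIx x). rewrite H, addxN; reflexivity. Qed.

Lemma oppK x : opp (opp x) = x.
Proof. symmetry; apply opp_unique, addNx. Qed.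

Lemma oppD x y : opp (add x y) = add (opp x) (opp y).
Proof.
  symmetry; apply opp_unique.
  rewrite (addC _ (opp x)), addA, <- (addA _ x y), addxN, addx0, addxN; reflexivity.
Qed.

Lemma opp0 : opp (@zero B) = zero.
Proof. symmetry; apply opp_unique, addx0. Qed.

Lemma subr0_eq x y : add x (opp y) = zero -> x = y.
Proof. intro H. apply opp_unique in H. rewrite <- (oppK x), <- H, oppK; reflexivity. Qed.

Lemma mulx0 x : mul x zero = zero.
Proof. apply (addIx (mul x zero)). rewrite <- mulDr, !addx0; reflexivity. Qed.

Lemma mul0x x : mul zero x = zero.
Proof. apply (addIx (mul zero x)). rewrite <- mulDl, !addx0; reflexivity. Qed.

Lemma mulxN x y : mul x (opp y) = opp (mul x y).
Proof. apply opp_unique. rewrite <- mulDr, addxN, mulx0; reflexivity. Qed.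

Lemma mulNx x y : mul (opp x) y = opp (mul x y).
Proof. apply opp_unique. rewrite <- mulDl, addxN, mul0x; reflexivity. Qed.

Definition rscal (r : R) x : B := scal (r, 0) x.

Lemma rscalDl r s x : rscal (r + s) x = add (rscal r x) (rscal s x).
Proof. unfold rscal. rewrite <- scalDl. unfold Cadd; simpl. do 2 f_equal; ring. Qed.

Lemma rscalA r s x : rscal r (rscal s x) = rscal (r * s) x.
Proof. unfold rscal. rewrite <- scalA. unfold Cmul; simpl. do 2 f_equal; ring. Qed.

Lemma rscal1 x : rscal 1 x = x.
Proof. apply scal1. Qed.

Lemma rscal0 x : rscal 0 x = zero.
Proof. apply (addIx (rscal 0 x)). rewrite <- rscalDl, Rplus_0_r, addx0; reflexivity. Qed.

Lemma rscalx0 r : rscal r (@zero B) = zero.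
Proof. apply (addIx (rscal r zero)). unfold rscal. rewrite <- scalDr, !addx0; reflexivity. Qed.

Lemma rscalNl r x : rscal (- r) x = opp (rscal r x).
Proof. apply opp_unique. rewrite <- rscalDl, Rplus_opp_r, rscal0; reflexivity. Qed.

Lemma rscalNr r x : rscal r (opp x) = opp (rscal r x).
Proof.
  apply opp_unique. unfold rscal. rewrite <- scalDr, addxN. apply rscalx0.
Qed.

Lemma rscalDr r x y : rscal r (add x y) = add (rscal r x) (rscal r y).
Proof. apply scalDr. Qed.

Lemma rscalMl r x y : rscal r (mul x y) = mul (rscal r x) y.
Proof. apply scalMl. Qed.

Lemma rscalMr r x y : rscal r (mul x y) = mul x (rscal r y).
Proof. apply scalMr. Qed.

Lemma norm_rscal r x : norm (rscal r x) = Rabs r * norm x.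
Proof.
  unfold rscal. rewrite normZ. unfold Cabs; simpl. f_equal.
  rewrite <- sqrt_Rsqr_abs. f_equal. unfold Rsqr; ring.
Qed.

Lemma norm0 : norm (@zero B) = 0.
Proof. rewrite <- (rscal0 zero), norm_rscal, Rabs_R0; ring. Qed.

Lemma normN x : norm (opp x) = norm x.
Proof.
  rewrite <- (rscal1 x), <- rscalNl, !norm_rscal, Rabs_Ropp; reflexivity.
Qed.

Lemma norm_ge0 x : 0 <= norm x.
Proof. pose proof (normD _ x (opp x)) as H. rewrite addxN, norm0, normN in H. lra. Qed.

Lemma norm_le_addr x y : norm x <= norm (add x y) + norm y.
Proof.
  pose proof (normD _ (add x y) (opp y)) as H.
  rewrite <- addA, addxN, addx0, normN in H. exact H.
Qed.

Lemma star1 : star (@one B) = one.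
Proof.
  rewrite <- (mulx1 _ (star one)), <- (starK _ (mul (star one) one)), starM, starK.
  rewrite mulx1, starK; reflexivity.
Qed.

Lemma star0 : star (@zero B) = zero.
Proof. rewrite <- (mulx0 (star zero)) at 1. rewrite starM, starK. apply mulx0. Qed.

Lemma starN x : star (opp x) = opp (star x).
Proof. apply opp_unique. rewrite <- starD, addxN, star0; reflexivity. Qed.

Lemma norm1_le1 : norm (@one B) <= 1.
Proof.
  pose proof (normCstar B one) as H. rewrite star1, mul1x in H.
  pose proof (norm_ge0 (@one B)). nra.
Qed.

Lemma norm_star x : norm (star x) = norm x.
Proof.
  assert (le : forall y : B, norm (star y) <= norm y).
  { intro y. pose proof (normCstar _ (star y)) as H. rewrite starK in H.
    pose proof (normM _ y (star y)). pose proof (norm_ge0 (star y)). pose proof (norm_ge0 y).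
    nra. }
  apply Rle_antisym; [apply le|]. rewrite <- (starK _ x) at 1. apply le.
Qed.

Lemma star_mul_self_eq0 x : mul (star x) x = zero -> x = zero.
Proof.
  intro H. apply norm_eq0. pose proof (normCstar _ x) as E. rewrite H, norm0 in E. nra.
Qed.

Lemma mul_star_self_eq0 x : mul x (star x) = zero -> x = zero.
Proof.
  intro H. rewrite <- (starK _ x), (star_mul_self_eq0 (star x)); [apply star0|].
  rewrite starK; exact H.
Qed.

Lemma norm_isometry_le1 x : isometry x -> norm x <= 1.
Proof.
  intro H. pose proof (normCstar _ x) as E. unfold isometry in H. rewrite H in E.
  pose proof norm1_le1. pose proof (norm_ge0 x). nra.
Qed.

Lemma norm_proj_le1 x : star x = x -> mul x x = x -> norm x <= 1.
Proof.
  intros Hs Hp. pose proof (normCstar _ x) as H. rewrite Hs, Hp in H.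
  pose proof (norm_ge0 x). nra.
Qed.

Lemma isometry_mul x y : isometry x -> isometry y -> isometry (mul x y).
Proof.
  unfold isometry. intros Hx Hy.
  rewrite starM, <- mulA, (mulA _ (star x)), Hx, mul1x. exact Hy.
Qed.

Lemma isometry_eq x y : isometry x -> isometry y -> mul (star x) y = one -> x = y.
Proof.
  unfold isometry. intros Hx Hy Hxy. apply subr0_eq, star_mul_self_eq0.
  assert (Hyx : mul (star y) x = one) by (rewrite <- (starK _ x), <- starM, Hxy; apply star1).
  rewrite starD, starN, mulDl, !mulDr, mulNx, !mulxN, mulNx, oppK, Hx, Hy, Hxy, Hyx.
  rewrite addxN, add0x; apply addNx.
Qed.

End Elementary.

Section AddTerm.
Context {B : CStarAlgebra}.

Inductive add_term := Atom (x : B) | Sum (a b : add_term) | Zero.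

Fixpoint add_eval (t : add_term) : B :=
  match t with Atom x => x | Sum a b => add (add_eval a) (add_eval b) | Zero => zero end.

Fixpoint add_atoms (t : add_term) : list B :=
  match t with Atom x => [x] | Sum a b => add_atoms a ++ add_atoms b | Zero => [] end.

Definition sumL (l : list B) : B := fold_right add zero l.

Lemma sumL_cat l1 l2 : sumL (l1 ++ l2) = add (sumL l1) (sumL l2).
Proof. induction l1; simpl. rewrite add0x; reflexivity. rewrite IHl1, addA; reflexivity. Qed.

Lemma add_evalE t : add_eval t = sumL (add_atoms t).
Proof.
  induction t; simpl; [apply eq_sym, addx0| |reflexivity].
  rewrite sumL_cat, IHt1, IHt2; reflexivity.
Qed.

Lemma sumL_perm l1 l2 : Permutation l1 l2 -> sumL l1 = sumL l2.
Proof.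
  induction 1; simpl; try congruence.
  rewrite !addA, (addC _ y); reflexivity.
Qed.

End AddTerm.

Ltac reify_add t :=
  match t with
  | add ?a ?b => let ra := reify_add a in let rb := reify_add b in constr:(Sum ra rb)
  | @zero _ => constr:(Zero)
  | _ => constr:(Atom t)
  end.

Ltac split_at a L :=
  match L with
  | a :: ?r => let T := type of a in constr:((@nil T, r))
  | ?b :: ?r => let p := split_at a r in
      match p with (?x, ?y) => constr:((b :: x, y)) end
  end.

Ltac solve_perm :=
  match goal with
  | |- Permutation nil nil => apply perm_nil
  | |- Permutation (?a :: ?l1) ?l2 =>
      let p := split_at a l2 in
      match p with (?x, ?y) =>
        change l2 with (x ++ a :: y); apply Permutation_cons_app; cbn [app]; solve_perm
      end
  end.

(* Closes [x = y] when [x] and [y] are sums of the same summands up to order. *)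
Ltac ac_add :=
  match goal with
  | |- ?x = ?y =>
    let rx := reify_add x in let ry := reify_add y in
    change (add_eval rx = add_eval ry); rewrite !add_evalE; apply sumL_perm;
    cbn [add_atoms app]; solve_perm
  end.

Lemma nat_mul_le_le0 (a b : R) : (forall k : nat, INR k * a <= b) -> a <= 0.
Proof.
  intro H. destruct (Rle_or_lt a 0) as [|Ha]; [assumption|].
  destruct (INR_unbounded (b / a)) as [k Hk]. specialize (H k).
  apply (Rmult_lt_compat_r a) in Hk; [|exact Ha].
  unfold Rdiv in Hk. rewrite Rmult_assoc, Rinv_l in Hk by lra. lra.
Qed.

Section RandomWalk.
Context {B : CStarAlgebra}.
Variables u v : B.

(* [walk N g] is the sum over all words [w] of length [N] in [u] and [v] of
   [g (#u - #v) * w]; [walk_mean N g] is the expectation of [g] at the end of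
   [N] steps of the symmetric random walk on the integers. *)
Fixpoint walk (N : nat) (g : R -> R) : B :=
  match N with
  | O => rscal (g 0) one
  | S N => add (mul (walk N (fun d => g (d + 1))) u) (mul (walk N (fun d => g (d - 1))) v)
  end.

Fixpoint walk_mean (N : nat) (g : R -> R) : R :=
  match N with
  | O => g 0
  | S N => (walk_mean N (fun d => g (d + 1)) + walk_mean N (fun d => g (d - 1))) / 2
  end.

Lemma walk_lin N g1 g2 a b g : (forall d, g d = a * g1 d + b * g2 d) ->
  walk N g = add (rscal a (walk N g1)) (rscal b (walk N g2)).
Proof.
  revert g1 g2 g; induction N as [|N IH]; intros g1 g2 g Hg; simpl.
  - rewrite Hg, rscalDl, <- !rscalA; reflexivity.
  - rewrite (IH (fun d => g1 (d + 1)) (fun d => g2 (d + 1)) (fun d => g (d + 1))),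
            (IH (fun d => g1 (d - 1)) (fun d => g2 (d - 1)) (fun d => g (d - 1)))
      by (intro; apply Hg).
    rewrite !mulDl, !rscalDr, <- !rscalMl. ac_add.
Qed.

Lemma walk_mean_lin N g1 g2 a b g : (forall d, g d = a * g1 d + b * g2 d) ->
  walk_mean N g = a * walk_mean N g1 + b * walk_mean N g2.
Proof.
  revert g1 g2 g; induction N as [|N IH]; intros g1 g2 g Hg; simpl; [apply Hg|].
  rewrite (IH (fun d => g1 (d + 1)) (fun d => g2 (d + 1)) (fun d => g (d + 1))),
          (IH (fun d => g1 (d - 1)) (fun d => g2 (d - 1)) (fun d => g (d - 1)))
    by (intro; apply Hg).
  field.
Qed.

Lemma walk_mean_const1 N : walk_mean N (fun _ => 1) = 1.
Proof. induction N as [|N IH]; simpl; [|rewrite IH]; field. Qed.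

Lemma walk_mean_id N : walk_mean N (fun d => d) = 0.
Proof.
  induction N as [|N IH]; simpl; [reflexivity|].
  rewrite (walk_mean_lin N (fun d => d) (fun _ => 1) 1 1 (fun d => d + 1)),
          (walk_mean_lin N (fun d => d) (fun _ => 1) 1 (-1) (fun d => d - 1))
    by (intro; ring).
  rewrite IH, walk_mean_const1; field.
Qed.

Lemma walk_mean_sqr N : walk_mean N (fun d => d * d) = INR N.
Proof.
  induction N as [|N IH]; cbn [walk_mean]; [simpl; ring|].
  rewrite (walk_mean_lin N (fun d => d * d) (fun d => 2 * d + 1) 1 1
             (fun d => (d + 1) * (d + 1))),
          (walk_mean_lin N (fun d => d * d) (fun d => - 2 * d + 1) 1 1
             (fun d => (d - 1) * (d - 1))) by (intro; ring).
  rewrite (walk_mean_lin N (fun d => d) (fun _ => 1) 2 1 (fun d => 2 * d + 1)),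
          (walk_mean_lin N (fun d => d) (fun _ => 1) (-2) 1 (fun d => - 2 * d + 1))
    by (intro; ring).
  rewrite IH, walk_mean_id, walk_mean_const1, S_INR; field.
Qed.

Hypothesis Hu : norm u <= / 2.
Hypothesis Hv : norm v <= / 2.

Lemma norm_walk_le N g : (forall d, 0 <= g d) -> norm (walk N g) <= walk_mean N g.
Proof.
  revert g; induction N as [|N IH]; intros g Hg; simpl.
  - rewrite norm_rscal, Rabs_pos_eq by apply Hg.
    pose proof (@norm1_le1 B). pose proof (norm_ge0 (@one B)). specialize (Hg 0). nra.
  - set (g1 := fun d => g (d + 1)). set (g2 := fun d => g (d - 1)).
    pose proof (IH g1 (fun d => Hg _)). pose proof (IH g2 (fun d => Hg _)).
    pose proof (normD _ (mul (walk N g1) u) (mul (walk N g2) v)).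
    pose proof (normM _ (walk N g1) u). pose proof (normM _ (walk N g2) v).
    pose proof (norm_ge0 (walk N g1)). pose proof (norm_ge0 (walk N g2)).
    pose proof (norm_ge0 u). pose proof (norm_ge0 v).
    assert (norm (walk N g1) * norm u <= walk_mean N g1 * / 2)
      by (apply Rmult_le_compat; lra).
    assert (norm (walk N g2) * norm v <= walk_mean N g2 * / 2)
      by (apply Rmult_le_compat; lra).
    lra.
Qed.

Hypothesis Huv : add u v = one.

Let e := add u (opp v).

Lemma walk_const1 N : walk N (fun _ => 1) = one.
Proof. induction N as [|N IH]; simpl; [apply rscal1|]. rewrite IH, !mul1x; exact Huv. Qed.

Lemma walk_id N : walk N (fun d => d) = rscal (INR N) e.
Proof.
  induction N as [|N IH]; cbn [walk]; [simpl; rewrite !rscal0; reflexivity|].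
  rewrite (walk_lin N (fun d => d) (fun _ => 1) 1 1 (fun d => d + 1)),
          (walk_lin N (fun d => d) (fun _ => 1) 1 (Ropp 1) (fun d => d - 1)) by (intro; ring).
  rewrite IH, walk_const1, !rscal1, rscalNl, rscal1, !mulDl, mulNx, !mul1x.
  transitivity (add (add (mul (rscal (INR N) e) u) (mul (rscal (INR N) e) v))
                    (add u (opp v))); [ac_add|].
  rewrite <- mulDr, Huv, mulx1, S_INR, rscalDl, rscal1; reflexivity.
Qed.

Lemma walk_sqr N :
  walk N (fun d => d * d) = add (rscal (INR N) one) (rscal (INR N * (INR N - 1)) (mul e e)).
Proof.
  induction N as [|N IH]; cbn [walk].
  { simpl. rewrite !Rmult_0_l, !rscal0, addx0; reflexivity. }
  rewrite (walk_lin N (fun d => d * d + 1) (fun d => d) 1 2 (fun d => (d + 1) * (d + 1))),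
          (walk_lin N (fun d => d * d + 1) (fun d => d) 1 (Ropp 2) (fun d => (d - 1) * (d - 1)))
    by (intro; ring).
  rewrite (walk_lin N (fun d => d * d) (fun _ => 1) 1 1 (fun d => d * d + 1)) by (intro; ring).
  rewrite IH, walk_id, walk_const1, !rscal1, !rscalA.
  replace (Ropp 2 * INR N) with (Ropp (2 * INR N)) by ring. rewrite rscalNl.
  set (W := add (rscal (INR N) one) (rscal (INR N * (INR N - 1)) (mul e e))).
  transitivity (add (add (mul (add W one) u) (mul (add W one) v))
                    (add (mul (rscal (2 * INR N) e) u) (mul (rscal (2 * INR N) e) (opp v)))).
  { rewrite !mulDl, !mulxN, !mulNx. ac_add. }
  rewrite <- !mulDr, Huv, mulx1, <- rscalMl. fold e. unfold W.
  rewrite S_INR, rscalDl, rscal1.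
  replace ((INR N + 1) * (INR N + 1 - 1)) with (INR N * (INR N - 1) + 2 * INR N) by ring.
  rewrite rscalDl. ac_add.
Qed.

Lemma half_split_sub_sqr_eq0 : mul e e = zero.
Proof.
  apply norm_eq0, Rle_antisym; [|apply norm_ge0].
  apply (nat_mul_le_le0 _ 2). intro k.
  pose proof (norm_walk_le (S k) (fun d => d * d) (fun d => Rle_0_sqr d)) as Hb.
  rewrite walk_sqr, walk_mean_sqr in Hb.
  pose proof (norm_le_addr (rscal (INR (S k) * (INR (S k) - 1)) (mul e e))
                           (rscal (INR (S k)) one)) as Hle.
  rewrite addC, !norm_rscal in Hle.
  rewrite S_INR in *. replace (INR k + 1 - 1) with (INR k) in * by ring.
  pose proof (pos_INR k). pose proof (@norm1_le1 B). pose proof (norm_ge0 (@one B)).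
  pose proof (norm_ge0 (mul e e)).
  rewrite !Rabs_pos_eq in Hle by nra.
  nra.
Qed.

End RandomWalk.

Section Positivity.
Context {B : CStarAlgebra}.
Implicit Types x y : B.

Lemma mul_self_eq0_of_norm_pm (M : R) x : 0 < M ->
  norm (add (rscal M one) (opp x)) <= M -> norm (add (rscal M one) x) <= M -> mul x x = zero.
Proof.
  intros HM Hm Hp.
  set (c := / (2 * M)).
  set (u := rscal c (add (rscal M one) x)).
  set (v := rscal c (add (rscal M one) (opp x))).
  assert (Hu : norm u <= / 2).
  { unfold u. rewrite norm_rscal, Rabs_pos_eq by (apply Rlt_le, Rinv_0_lt_compat; lra).
    replace (/ 2) with (c * M) by (unfold c; field; lra).
    apply Rmult_le_compat_l; [apply Rlt_le, Rinv_0_lt_compat; lra|exact Hp]. }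
  assert (Hv : norm v <= / 2).
  { unfold v. rewrite norm_rscal, Rabs_pos_eq by (apply Rlt_le, Rinv_0_lt_compat; lra).
    replace (/ 2) with (c * M) by (unfold c; field; lra).
    apply Rmult_le_compat_l; [apply Rlt_le, Rinv_0_lt_compat; lra|exact Hm]. }
  assert (Huv : add u v = one).
  { unfold u, v. rewrite <- rscalDr.
    transitivity (rscal c (add (add (rscal M one) (rscal M one)) (add x (opp x)))).
    { f_equal; ac_add. }
    rewrite addxN, addx0, <- rscalDl, rscalA.
    replace (c * (M + M)) with 1 by (unfold c; field; lra). apply rscal1. }
  assert (Hdiff : add u (opp v) = rscal (2 * c) x).
  { unfold u, v. rewrite <- rscalNr, <- rscalDr, oppD, oppK.
    transitivity (rscal c (add (add (rscal M one) (opp (rscal M one))) (add x x))).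
    { f_equal; ac_add. }
    rewrite addxN, add0x, <- (rscal1 x), <- rscalDl, !rscalA. f_equal; ring. }
  pose proof (half_split_sub_sqr_eq0 u v Hu Hv Huv) as Hsq.
  rewrite Hdiff, <- rscalMl, <- rscalMr, rscalA in Hsq.
  assert (Hk : 2 * c * (2 * c) <> 0).
  { apply Rgt_not_eq, Rmult_gt_0_compat; apply Rmult_gt_0_compat; try lra;
      apply Rinv_0_lt_compat; lra. }
  rewrite <- (rscal1 (mul x x)), <- (Rinv_l _ Hk), <- rscalA, Hsq. apply rscalx0.
Qed.

Lemma norm_sub_sumA_le (f : nat -> B) s :
  (forall i, In i s -> norm (add one (opp (f i))) <= 1) ->
  norm (add (rscal (INR (length s)) one) (opp (sumA f s))) <= INR (length s).
Proof.
  induction s as [|i s IH]; intro H; cbn [length sumA fold_right].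
  - simpl. rewrite rscal0, opp0, addx0, norm0; lra.
  - fold (sumA f s). rewrite S_INR, rscalDl, rscal1, oppD.
    transitivity (norm (add (add one (opp (f i)))
                            (add (rscal (INR (length s)) one) (opp (sumA f s))))).
    { right; f_equal; ac_add. }
    eapply Rle_trans; [apply normD|].
    pose proof (H i (or_introl eq_refl)). pose proof (IH (fun j Hj => H j (or_intror Hj))).
    lra.
Qed.

(* The elements [y] with [y^* = y] and [|1 - y| <= 1] are exactly the
   positive ones of norm at most 2. *)
Lemma sumA_eq0_pos (f : nat -> B) s :
  (forall i, In i s -> star (f i) = f i /\ norm (add one (opp (f i))) <= 1) ->
  sumA f s = zero -> forall i, In i s -> f i = zero.
Proof.
  induction s as [|j s IH]; intros H Hs i Hi; [destruct Hi|].
  cbn [sumA fold_right] in Hs; fold (sumA f s) in Hs.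
  pose proof (pos_INR (length s)) as Hlen.
  assert (Hj : f j = zero).
  { destruct (H j (or_introl eq_refl)) as [Hsa Hn].
    apply star_mul_self_eq0. rewrite Hsa.
    apply (mul_self_eq0_of_norm_pm (INR (length s) + 1)); [lra| |].
    - rewrite rscalDl, rscal1.
      transitivity (norm (add (rscal (INR (length s)) one) (add one (opp (f j))))).
      { right; f_equal; ac_add. }
      eapply Rle_trans; [apply normD|].
      rewrite norm_rscal, Rabs_pos_eq by exact Hlen.
      pose proof (@norm1_le1 B). pose proof (norm_ge0 (@one B)). nra.
    - rewrite (opp_unique _ _ (eq_trans (addC _ _ _) Hs)), rscalDl, rscal1.
      transitivity (norm (add one (add (rscal (INR (length s)) one) (opp (sumA f s))))).
      { right; f_equal; ac_add. }
      eapply Rle_trans; [apply normD|].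
      pose proof (@norm1_le1 B).
      pose proof (norm_sub_sumA_le f s (fun k Hk => proj2 (H k (or_intror Hk)))). lra. }
  destruct Hi as [<-|Hi]; [exact Hj|].
  apply IH; auto.
  - intros k Hk; apply H; right; exact Hk.
  - rewrite Hj, add0x in Hs. exact Hs.
Qed.

Lemma norm_one_sub_conj_proj_le1 (w p : B) : isometry w -> star p = p -> mul p p = p ->
  norm (add one (opp (mul (star w) (mul p w)))) <= 1.
Proof.
  unfold isometry. intros Hw Hs Hp.
  assert (Hq : add one (opp (mul (star w) (mul p w))) =
               mul (star w) (mul (add one (opp p)) w)).
  { rewrite mulDl, mul1x, mulNx, mulDr, mulxN, Hw; reflexivity. }
  assert (Hqn : norm (add one (opp p)) <= 1).
  { apply norm_proj_le1.
    - rewrite starD, starN, star1, Hs; reflexivity.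
    - rewrite mulDl, !mulDr, mul1x, mulx1, mulNx, !mulxN, oppK, !mul1x, Hp.
      transitivity (add (add one (opp p)) (add p (opp p))); [ac_add|].
      rewrite addxN, addx0; reflexivity. }
  pose proof (norm_isometry_le1 w Hw) as Hwn.
  pose proof (normM _ (star w) (mul (add one (opp p)) w)).
  pose proof (normM _ (add one (opp p)) w).
  rewrite norm_star in *. rewrite Hq.
  pose proof (norm_ge0 w). pose proof (norm_ge0 (add one (opp p))).
  pose proof (norm_ge0 (mul (add one (opp p)) w)).
  nra.
Qed.

End Positivity.

Section Sums.
Context {B : CStarAlgebra}.
Implicit Types (x : B) (f g : nat -> B).

Lemma sumA_cat f s1 s2 : sumA f (s1 ++ s2) = add (sumA f s1) (sumA f s2).
Proof. induction s1; simpl; [rewrite add0x|rewrite IHs1, addA]; reflexivity. Qed.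

Lemma eq_sumA f g s : (forall i, In i s -> f i = g i) -> sumA f s = sumA g s.
Proof.
  induction s as [|i s IH]; intro H; simpl; [reflexivity|].
  rewrite H, IH; [reflexivity| |left; reflexivity].
  intros j Hj; apply H; right; exact Hj.
Qed.

Lemma sumA_eq0 f s : (forall i, In i s -> f i = zero) -> sumA f s = zero.
Proof.
  induction s as [|i s IH]; intro H; simpl; [reflexivity|].
  rewrite H, IH, addx0; [reflexivity| |left; reflexivity].
  intros j Hj; apply H; right; exact Hj.
Qed.

Lemma mulx_sumA x f s : mul x (sumA f s) = sumA (fun i => mul x (f i)) s.
Proof. induction s; simpl; [apply mulx0|rewrite mulDr, IHs; reflexivity]. Qed.

Lemma mul_sumAx x f s : mul (sumA f s) x = sumA (fun i => mul (f i) x) s.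
Proof. induction s; simpl; [apply mul0x|rewrite mulDl, IHs; reflexivity]. Qed.

Lemma sumA_filter f p s :
  sumA f (filter p s) = sumA (fun i => if p i then f i else zero) s.
Proof.
  induction s as [|i s IH]; simpl; [reflexivity|].
  destruct (p i); simpl; rewrite IH; [|rewrite add0x]; reflexivity.
Qed.

Lemma sumA_seq_mul f m k : (0 < m)%nat ->
  (forall l, l mod m <> 0%nat -> f l = zero) ->
  sumA f (seq 0 (k * m)) = sumA (fun j => f (m * j)%nat) (seq 0 k).
Proof.
  intros Hm Hf. induction k as [|k IH]; [reflexivity|].
  rewrite Nat.mul_succ_l, seq_app, sumA_cat, IH, seq_S, sumA_cat. f_equal.
  destruct m as [|m]; [lia|]. simpl seq. simpl sumA.
  rewrite sumA_eq0, Nat.mul_comm; [reflexivity|].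
  intros i Hi. apply in_seq in Hi. apply Hf.
  replace i with (i - k * S m + k * S m)%nat by lia.
  rewrite Nat.Div0.mod_add, Nat.mod_small by lia. lia.
Qed.

End Sums.

Section Powers.
Context {B : CStarAlgebra}.
Implicit Types x y : B.

Lemma pw_commute x k : mul (pw x k) x = mul x (pw x k).
Proof. induction k; simpl; [rewrite mul1x, mulx1|rewrite <- mulA, IHk]; reflexivity. Qed.

Lemma pwD x a b : pw x (a + b) = mul (pw x a) (pw x b).
Proof. induction a; simpl; [rewrite mul1x|rewrite IHa, mulA]; reflexivity. Qed.

Lemma star_pw x k : star (pw x k) = pw (star x) k.
Proof. induction k; simpl; [apply star1|rewrite starM, IHk, pw_commute; reflexivity]. Qed.

Lemma pw_mul_star_pw x k : mul x (star x) = one -> mul (pw x k) (pw (star x) k) = one.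
Proof.
  intro H. induction k; simpl; [apply mul1x|].
  rewrite <- (pw_commute (star x)), mulA, <- (mulA _ x (pw x k)), IHk, mulx1. exact H.
Qed.

Lemma mul_pw_intertwine y x n k : mul y x = mul (pw x n) y ->
  mul y (pw x k) = mul (pw x (n * k)) y.
Proof.
  intro H. induction k as [|k IH].
  - rewrite Nat.mul_0_r. simpl. rewrite mul1x, mulx1; reflexivity.
  - cbn [pw]. rewrite mulA, H, <- mulA, IH, mulA, <- pwD.
    do 2 f_equal. lia.
Qed.

End Powers.

Section CovariantIsometry.
Context {B : CStarAlgebra}.
Variables (U T : B) (n : nat).
Hypothesis HU : mul U (star U) = one.
Hypothesis HT : isometry T.
Hypothesis Hsum :
  sumA (fun i => mul (mul (pw U i) (mul T (star T))) (pw (star U) i)) (seq 0 n) = one.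

(* Compressing the partition of unity by [T] gives [1 = sum_i a_i a_i^*] with
   [a_i = T^* U^i T] and [a_0 = 1]; the remaining summands are positive and
   sum to [0], so they vanish. *)
Lemma star_isometry_pw_eq0 r : (0 < r < n)%nat -> mul (star T) (mul (pw U r) T) = zero.
Proof.
  intro Hr.
  set (w := fun i => mul (pw (star U) i) T).
  set (p := mul T (star T)).
  set (g := fun i => mul (star (w i)) (mul p (w i))).
  assert (Hw_star : forall i, star (w i) = mul (star T) (pw U i)).
  { intro i. unfold w. rewrite starM, star_pw, starK; reflexivity. }
  assert (Hw : forall i, isometry (w i)).
  { intro i. unfold isometry. rewrite Hw_star. unfold w.
    rewrite <- mulA, (mulA _ (pw U i)), pw_mul_star_pw, mul1x by exact HU. exact HT. }
  assert (Hg : sumA g (seq 0 n) = one).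
  { transitivity (mul (star T) (mul (sumA (fun i => mul (mul (pw U i) p) (pw (star U) i))
                                          (seq 0 n)) T)).
    - rewrite mul_sumAx, mulx_sumA. apply eq_sumA; intros i _.
      unfold g. rewrite Hw_star. unfold w. rewrite !mulA; reflexivity.
    - unfold p. rewrite Hsum, mul1x. exact HT. }
  assert (Hg0 : g 0%nat = one).
  { unfold g, p. rewrite Hw_star. unfold w. simpl.
    rewrite mulx1, mul1x, !mulA, HT, mul1x. exact HT. }
  replace (seq 0 n) with (0%nat :: seq 1 (n - 1)) in Hg
    by (replace n with (S (n - 1)) at 2 by lia; reflexivity).
  cbn [sumA fold_right] in Hg. fold (sumA g (seq 1 (n - 1))) in Hg. rewrite Hg0 in Hg.
  assert (Hgr : g r = zero).
  { apply (sumA_eq0_pos g (seq 1 (n - 1))).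
    - intros i _. split.
      + unfold g, p. rewrite !starM, !starK, !mulA; reflexivity.
      + apply norm_one_sub_conj_proj_le1; [apply Hw| |].
        * unfold p. rewrite starM, starK; reflexivity.
        * unfold p. rewrite <- mulA, (mulA _ (star T)), HT, mul1x; reflexivity.
    - apply (addIx one). rewrite addx0. exact Hg.
    - apply in_seq. lia. }
  apply mul_star_self_eq0. rewrite <- Hgr. unfold g, p.
  rewrite starM, starM, star_pw, starK, Hw_star. unfold w. rewrite !mulA; reflexivity.
Qed.

Hypothesis Hn : (0 < n)%nat.
Hypothesis Hcov : mul T U = mul (pw U n) T.

Lemma star_isometry_pw k :
  mul (star T) (mul (pw U k) T) = if (k mod n =? 0)%nat then pw U (k / n) else zero.
Proof.
  rewrite (Nat.div_mod_eq k n) at 1.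
  rewrite Nat.add_comm, pwD, <- mulA, <- (mul_pw_intertwine T U n (k / n) Hcov), !mulA.
  destruct (Nat.eqb_spec (k mod n) 0) as [E|E].
  - rewrite E. simpl. rewrite mulx1, HT. apply mul1x.
  - rewrite <- (mulA _ (star T)), star_isometry_pw_eq0; [apply mul0x|].
    pose proof (Nat.mod_upper_bound k n). lia.
Qed.

End CovariantIsometry.

Section CommutingPair.
Context {B : CStarAlgebra}.
Variables (U Sn Sm : B) (n m : nat).
Hypothesis HU : mul U (star U) = one.
Hypotheses (Hn : (0 < n)%nat) (Hm : (0 < m)%nat).
Hypotheses (HSn : isometry Sn) (HSm : isometry Sm).
Hypotheses (Hcov_n : mul Sn U = mul (pw U n) Sn) (Hcov_m : mul Sm U = mul (pw U m) Sm).
Hypothesis Hsum_n :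
  sumA (fun i => mul (mul (pw U i) (mul Sn (star Sn))) (pw (star U) i)) (seq 0 n) = one.
Hypothesis Hsum_m :
  sumA (fun i => mul (mul (pw U i) (mul Sm (star Sm))) (pw (star U) i)) (seq 0 m) = one.

Let rhs :=
  sumA (fun l => mul (mul (pw U (l / n)) (mul Sm (star Sn))) (pw (star U) (l / m)))
       (filter (fun l => andb (Nat.eqb (l mod n) 0) (Nat.eqb (l mod m) 0)) (seq 0 (n * m))).

(* Insert [1 = sum_j U^j Sn Sn^* U^-j]; the term [j] becomes the summand [l = m j]. *)
Lemma star_mul_of_commute : mul Sn Sm = mul Sm Sn -> mul (star Sn) Sm = rhs.
Proof.
  intro Hc. unfold rhs.
  rewrite sumA_filter, (sumA_seq_mul _ m n Hm).
  2:{ intros l Hl. apply Nat.eqb_neq in Hl. rewrite Hl, Bool.andb_false_r; reflexivity. }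
  rewrite <- (mulx1 _ (mul (star Sn) Sm)), <- Hsum_n, mulx_sumA.
  apply eq_sumA; intros j _.
  assert (Hmod : ((m * j) mod m = 0)%nat) by (rewrite Nat.mul_comm; apply Nat.Div0.mod_mul).
  assert (Hdiv : ((m * j) / m = j)%nat) by (rewrite Nat.mul_comm; apply Nat.div_mul; lia).
  rewrite Hmod, Hdiv, Bool.andb_true_r.
  transitivity (mul (mul (star Sn) (mul (pw U (m * j)) Sn))
                    (mul (mul Sm (star Sn)) (pw (star U) j))).
  - rewrite !mulA, <- (mulA _ (star Sn) Sm (pw U j)), (mul_pw_intertwine Sm U m j Hcov_m).
    rewrite (mulA _ (star Sn) (pw U (m * j)) Sm), <- (mulA _ _ Sm Sn), <- Hc, !mulA.
    reflexivity.
  - rewrite (star_isometry_pw U Sn n HU HSn Hsum_n Hn Hcov_n).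
    destruct (_ =? 0)%nat; [rewrite !mulA|rewrite mul0x]; reflexivity.
Qed.

(* The summand [l = 0] of [rhs] gives [(Sn Sm)^* (Sm Sn) = 1 + ...]; every other
   summand vanishes, since [nm] does not divide [l]. *)
Lemma commute_of_star_mul : mul (star Sn) Sm = rhs -> mul Sn Sm = mul Sm Sn.
Proof.
  intro Hf.
  apply isometry_eq; [apply isometry_mul; assumption|apply isometry_mul; assumption|].
  rewrite starM, <- mulA, (mulA _ (star Sn)), Hf. unfold rhs.
  replace (n * m)%nat with (S (n * m - 1)) by nia. cbn [seq filter].
  rewrite !Nat.Div0.mod_0_l. cbn [Nat.eqb andb].
  change (sumA ?f (0%nat :: ?s)) with (add (f 0%nat) (sumA f s)). cbv beta.
  rewrite !Nat.Div0.div_0_l. cbn [pw].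
  rewrite mul1x, mulx1, mulDl, mulDr, <- mulA, (mulA _ (star Sm)), HSm, mul1x, HSn.
  rewrite mul_sumAx, mulx_sumA, sumA_eq0, addx0; [reflexivity|].
  intros l Hl. apply filter_In in Hl. destruct Hl as [Hl Hdiv].
  apply in_seq in Hl. apply andb_prop in Hdiv. destruct Hdiv as [Hdiv_n _].
  apply Nat.eqb_eq in Hdiv_n.
  rewrite !mulA, <- (mulA _ (star Sm) (pw U (l / n)) Sm).
  rewrite (star_isometry_pw U Sm m HU HSm Hsum_m Hm Hcov_m).
  destruct (Nat.eqb_spec ((l / n) mod m) 0) as [E|E]; [exfalso|rewrite !mul0x; reflexivity].
  pose proof (Nat.div_mod_eq l n) as Dl. pose proof (Nat.div_mod_eq (l / n) m) as Dq.
  rewrite Hdiv_n in Dl. rewrite E in Dq.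
  set (q := (l / n)%nat) in *. set (q' := (q / m)%nat) in *. clearbody q q'. subst.
  destruct q'; nia.
Qed.

End CommutingPair.

Theorem proposition4p7 (B : CStarAlgebra) (S : nat -> Prop) (Sg : nat -> B) (U : B)
  (HS1 : forall n, S n -> (2 <= n)%nat)
  (HS2 : exists n, S n)
  (Hiso : forall n, S n -> isometry (Sg n))
  (HU : unitary U)
  (Hgen : generated_by U S Sg)
  (Hcov : forall n, S n -> mul (Sg n) U = mul (pw U n) (Sg n))
  (Hsum : forall n, S n ->
     sumA (fun i => mul (mul (pw U i) (mul (Sg n) (star (Sg n)))) (pw (star U) i))
          (seq 0 n) = one) :
  (forall n m, S n -> S m -> mul (Sg n) (Sg m) = mul (Sg m) (Sg n)) <->
  (forall n m, S n -> S m ->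
     mul (star (Sg n)) (Sg m) =
     sumA (fun l => mul (mul (pw U (l / n)) (mul (Sg m) (star (Sg n))))
                        (pw (star U) (l / m)))
          (filter (fun l => andb (Nat.eqb (l mod n) 0) (Nat.eqb (l mod m) 0))
                  (seq 0 (n * m)))).
Proof.
  assert (Hpos : forall n, S n -> (0 < n)%nat) by (intros n Hn; specialize (HS1 n Hn); lia).
  destruct HU as [_ HUr].
  split; intros H n m Hn Hm.
  - apply star_mul_of_commute; auto.
  - apply (commute_of_star_mul U (Sg n) (Sg m) n m); auto.
Qed.
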